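(* For every $N\ge1$ and all complex numbers $z_1,\dots,z_N$, $$\prod_{i=1}^N\|x-z_i\|\le\sqrt{\frac{e^N}{N+1}}\,\Big\|\prod_{i=1}^N(x-z_i)\Big\|,$$ where $\|\cdot\|$ is the Bombieri–Weyl norm.
   Context: The Bombieri–Weyl norm of a univariate polynomial $P(z)=\sum_{i=0}^N a_iz^i$ of degree $N$ is $\|P\|=\big(\sum_{i=0}^N\binom{N}{i}^{-1}|a_i|^2\big)^{1/2}$ (so in particular $\|x-z\|=\sqrt{1+|z|^2}$). *)

From Stdlib Require Import Reals List.
Import ListNotations.
Open Scope R_scope.

(* Complex numbers as (real part, imaginary part). *)
Definition Cx : Type := (R * R)%type.
Definition Cx0 : Cx := (0, 0).
Definition Cx1 : Cx := (1, 0).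
Definition Cxsub (a b : Cx) : Cx := (fst a - fst b, snd a - snd b).
Definition Cxopp (a : Cx) : Cx := (- fst a, - snd a).
Definition Cxmul (a b : Cx) : Cx :=
  (fst a * fst b - snd a * snd b, fst a * snd b + snd a * fst b).
Definition Cxnorm2 (a : Cx) : R := fst a * fst a + snd a * snd a.

(* A univariate polynomial is its list of coefficients [a_0; a_1; ...; a_N]
   (lowest degree first); its (formal) degree is length - 1. *)

(* multiplication of a coefficient list by (x - z):
   b_0 = -z a_0, b_i = a_(i-1) - z a_i, b_(N+1) = a_N. *)
Fixpoint lin_mul_aux (z prev : Cx) (p : list Cx) : list Cx :=
  match p with
  | nil => [prev]
  | a :: p' => Cxsub prev (Cxmul z a) :: lin_mul_aux z a p'
  end.
Definition lin_mul (z : Cx) (p : list Cx) : list Cx := lin_mul_aux z Cx0 p.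

Definition lin_factor (z : Cx) : list Cx := [Cxopp z; Cx1].

Definition prod_lin (zs : list Cx) : list Cx :=
  fold_right lin_mul [Cx1] zs.

Definition bw_norm (p : list Cx) : R :=
  let N := (length p - 1)%nat in
  sqrt (sum_f_R0 (fun i => Cxnorm2 (nth i p Cx0) / Binomial.C N i) N).

Definition prod_bw_factors (zs : list Cx) : R :=
  fold_right Rmult 1 (map (fun z => bw_norm (lin_factor z)) zs).

(* For t in [0, 1], Landau's inequality (the l2 norm of the coefficients of a
   polynomial dominates its Mahler measure) applied to the homogenised product
   prod_i (sqrt t x - sqrt (1 - t) z_i), whose k-th coefficient is
   t^(k/2) (1 - t)^((N-k)/2) a_k, gives
     prod_i max (t, (1 - t) |z_i|^2) <= sum_k |a_k|^2 t^k (1 - t)^(N-k).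
   Integrating over [0, 1], the right side becomes ||P||^2 / (N + 1) by the Beta
   integral, while by Jensen's inequality for exp the left side is at least
   exp (sum_i int_0^1 ln max (t, (1 - t) |z_i|^2) dt) = prod_i (1 + |z_i|^2) / e,
   that is e^(-N) prod_i ||x - z_i||^2. *)

From Stdlib Require Import Reals List Lra Lia.
From Coquelicot Require Import Coquelicot.
Import ListNotations.
Open Scope R_scope.

Section RealIntegrals.

Variables (a b : R).

Lemma is_RInt_plus_R (f g : R -> R) (If Ig : R) :
  is_RInt f a b If -> is_RInt g a b Ig -> is_RInt (fun t => f t + g t) a b (If + Ig).
Proof. apply (is_RInt_plus f g). Qed.

Lemma is_RInt_minus_R (f g : R -> R) (If Ig : R) :
  is_RInt f a b If -> is_RInt g a b Ig -> is_RInt (fun t => f t - g t) a b (If - Ig).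
Proof. apply (is_RInt_minus f g). Qed.

Lemma is_RInt_scal_R (f : R -> R) (k If : R) :
  is_RInt f a b If -> is_RInt (fun t => k * f t) a b (k * If).
Proof. apply (is_RInt_scal f). Qed.

Lemma is_RInt_const_R (c : R) : is_RInt (fun _ => c) a b ((b - a) * c).
Proof. apply (is_RInt_const (V := R_NormedModule)). Qed.

Lemma is_RInt_value (f : R -> R) (l l' : R) :
  is_RInt f a b l -> l = l' -> is_RInt f a b l'.
Proof. now intros H <-. Qed.

Lemma is_RInt_derive_le (f df : R -> R) :
  a <= b ->
  (forall x, a <= x <= b -> is_derive f x (df x)) ->
  (forall x, a <= x <= b -> continuous df x) ->
  is_RInt df a b (f b - f a).
Proof.
  intros Hab Hd Hc. apply (is_RInt_derive f df).
  - intros x; rewrite Rmin_left, Rmax_right by lra; auto.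
  - intros x; rewrite Rmin_left, Rmax_right by lra; auto.
Qed.

Lemma is_RInt_sum_f_R0 (F : nat -> R -> R) (I : nat -> R) n :
  (forall k, (k <= n)%nat -> is_RInt (F k) a b (I k)) ->
  is_RInt (fun t => sum_f_R0 (fun k => F k t) n) a b (sum_f_R0 I n).
Proof.
  induction n as [|n IH]; intros H; simpl.
  - apply H; lia.
  - apply is_RInt_plus_R; [apply IH; intros k Hk |]; apply H; lia.
Qed.

End RealIntegrals.

(* d/dt [t^(a+1) (1-t)^(b+1)] = (a+1) t^a (1-t)^(b+1) - (b+1) t^(a+1) (1-t)^b
   integrates to 0, which lowers a by one. *)
Lemma is_RInt_beta (a b : nat) :
  is_RInt (fun t => t ^ a * (1 - t) ^ b) 0 1
    (INR (Factorial.fact a) * INR (Factorial.fact b) / INR (Factorial.fact (a + b + 1))).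
Proof.
  revert b; induction a as [|a IH]; intros b;
    assert (Hb : INR (S b) <> 0) by (apply not_0_INR; lia).
  - eapply is_RInt_value.
    + apply (is_RInt_ext (fun t => (1 - t) ^ b)); [intros; simpl; ring |].
      apply (is_RInt_derive_le _ _ (fun t => - (1 - t) ^ S b / INR (S b))); [lra | |].
      * intros x _. auto_derive; auto. fold (INR (S b)).
        replace (1 + - x) with (1 - x) by ring. field. exact Hb.
      * intros x _. apply (ex_derive_continuous (V := R_NormedModule)). auto_derive; auto.
    + replace (0 + b + 1)%nat with (S b) by lia.
      rewrite fact_simpl, mult_INR. simpl. rewrite Rminus_diag, Rminus_0_r, pow1.
      field. split; [apply INR_fact_neq_0 | exact Hb].
  - set (df := fun t => INR (S a) * (t ^ a * (1 - t) ^ S b) - INR (S b) * (t ^ S a * (1 - t) ^ b)).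
    assert (Hdf : is_RInt df 0 1 0).
    { eapply is_RInt_value.
      - apply (is_RInt_derive_le _ _ (fun t => t ^ S a * (1 - t) ^ S b)); [lra | |].
        + intros x _. unfold df. auto_derive; auto. fold (INR (S a)) (INR (S b)).
          replace (1 + - x) with (1 - x) by ring. simpl. ring.
        + intros x _. apply (ex_derive_continuous (V := R_NormedModule)). unfold df. auto_derive; auto.
      - simpl. ring. }
    assert (H := is_RInt_scal_R 0 1 _ (/ INR (S b)) _
      (is_RInt_minus_R 0 1 _ _ _ _ (is_RInt_scal_R 0 1 _ (INR (S a)) _ (IH (S b))) Hdf)).
    eapply is_RInt_value.
    + eapply is_RInt_ext; [| exact H].
      intros x _. unfold df. simpl. field. exact Hb.
    + replace (a + S b + 1)%nat with (S a + b + 1)%nat by lia.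
      rewrite (fact_simpl a), (fact_simpl b), !mult_INR.
      field. split; [apply INR_fact_neq_0 | exact Hb].
Qed.

Lemma is_RInt_ln_1_minus (u : R) : 0 <= u < 1 ->
  is_RInt (fun t => ln (1 - t)) 0 u (- (1 - u) * ln (1 - u) - u).
Proof.
  intros Hu. eapply is_RInt_value.
  - apply (is_RInt_derive_le _ _ (fun t => - (1 - t) * ln (1 - t) - t)); [lra | |].
    + intros x Hx. auto_derive; [lra |].
      replace (1 + - x) with (1 - x) by ring. field. lra.
    + intros x Hx. apply (ex_derive_continuous (V := R_NormedModule)). auto_derive. lra.
  - cbv beta. replace (1 - 0) with 1 by ring. rewrite ln_1. ring.
Qed.

Lemma is_RInt_ln (u : R) : 0 < u <= 1 ->
  is_RInt ln u 1 (- 1 - (u * ln u - u)).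
Proof.
  intros Hu. eapply is_RInt_value.
  - apply (is_RInt_derive_le _ _ (fun t => t * ln t - t)); [lra | |].
    + intros x Hx. auto_derive; [lra |]. field. lra.
    + intros x Hx. apply (ex_derive_continuous (V := R_NormedModule)). auto_derive. lra.
  - cbv beta. rewrite ln_1. ring.
Qed.

Lemma jensen_exp (f W : R -> R) (L I : R) :
  is_RInt f 0 1 L -> is_RInt W 0 1 I ->
  (forall t, 0 < t < 1 -> exp (f t) <= W t) -> exp L <= I.
Proof.
  intros Hf HW Hle.
  assert (Hsupp : is_RInt (fun t => exp L * (1 + (f t - L))) 0 1 (exp L * ((1 - 0) * 1 + (L - (1 - 0) * L)))).
  { apply is_RInt_scal_R, is_RInt_plus_R, is_RInt_minus_R; [apply is_RInt_const_R | exact Hf | apply is_RInt_const_R]. }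
  replace (exp L) with (exp L * ((1 - 0) * 1 + (L - (1 - 0) * L))) at 1 by ring.
  apply (is_RInt_le _ _ 0 1 _ _ Rle_0_1 Hsupp HW).
  intros t Ht. eapply Rle_trans; [| apply Hle; exact Ht].
  replace (f t) with (L + (f t - L)) at 2 by ring. rewrite exp_plus.
  apply Rmult_le_compat_l; [apply Rlt_le, exp_pos | apply exp_ineq1_le].
Qed.

Definition sum_list (l : list R) : R := fold_right Rplus 0 l.
Definition prod_list (l : list R) : R := fold_right Rmult 1 l.

Lemma exp_sum_list (l : list R) : exp (sum_list l) = prod_list (map exp l).
Proof.
  induction l as [|x l IH]; simpl; [apply exp_0 |].
  rewrite exp_plus. f_equal. exact IH.
Qed.

Lemma is_RInt_sum_list {A : Type} (F : A -> R -> R) (I : A -> R) (l : list A) a b :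
  (forall x, In x l -> is_RInt (F x) a b (I x)) ->
  is_RInt (fun t => sum_list (map (fun x => F x t) l)) a b (sum_list (map I l)).
Proof.
  induction l as [|x l IH]; intros H; simpl.
  - eapply is_RInt_value; [apply is_RInt_const_R | ring].
  - apply is_RInt_plus_R; [apply H; left | apply IH; intros y Hy; apply H; right]; auto.
Qed.

Section ProdList.

Context {A : Type}.

Lemma prod_list_map_ge0 (f : A -> R) (l : list A) :
  (forall x, In x l -> 0 <= f x) -> 0 <= prod_list (map f l).
Proof.
  induction l as [|x l IH]; intros H; simpl; [lra |].
  apply Rmult_le_pos; [apply H; left | apply IH; intros y Hy; apply H; right]; auto.
Qed.

Lemma prod_list_map_le (f g : A -> R) (l : list A) :
  (forall x, In x l -> 0 <= f x <= g x) ->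
  prod_list (map f l) <= prod_list (map g l).
Proof.
  induction l as [|x l IH]; intros H; simpl; [lra |].
  assert (Hx := H x (or_introl eq_refl)).
  assert (Hl : forall y, In y l -> 0 <= f y <= g y) by (intros y Hy; apply H; right; auto).
  apply Rmult_le_compat; try apply prod_list_map_ge0; try apply IH; try tauto.
  intros y Hy; apply Hl; auto.
Qed.

Lemma prod_list_map_le_pow (g : A -> R) (l : list A) (M : R) :
  (forall x, In x l -> 0 <= g x <= M) -> prod_list (map g l) <= M ^ length l.
Proof.
  intros H. replace (M ^ length l) with (prod_list (map (fun _ => M) l)).
  - apply prod_list_map_le. exact H.
  - clear H. induction l as [|x l IH]; simpl; [reflexivity | rewrite IH; reflexivity].
Qed.

Lemma prod_list_map_le_add (f g : A -> R) (l : list A) (M e : R) :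
  0 <= M -> 0 <= e <= 1 ->
  (forall x, In x l -> 0 <= g x <= M /\ 0 <= f x <= g x + e) ->
  prod_list (map f l) <=
    prod_list (map g l) + e * (INR (length l) * (M + 1) ^ length l).
Proof.
  intros HM He. induction l as [|x l IH]; intros H; [simpl; lra |].
  destruct (H x (or_introl eq_refl)) as [Hg Hf].
  assert (Hl : forall y, In y l -> 0 <= g y <= M /\ 0 <= f y <= g y + e)
    by (intros y Hy; apply H; right; auto).
  specialize (IH Hl).
  set (n := length l) in *. set (P := (M + 1) ^ n) in *.
  set (Pf := prod_list (map f l)) in *. set (Pg := prod_list (map g l)) in *.
  assert (Hpf : 0 <= Pf) by (apply prod_list_map_ge0; intros y Hy; apply Hl; auto).
  assert (Hpg : 0 <= Pg) by (apply prod_list_map_ge0; intros y Hy; apply Hl; auto).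
  assert (HpgP : Pg <= P).
  { apply Rle_trans with (M ^ n); [apply prod_list_map_le_pow; intros y Hy; apply Hl; auto |].
    apply pow_incr; lra. }
  assert (HP : 0 <= P) by (apply pow_le; lra).
  assert (Hn : 0 <= INR n) by apply pos_INR.
  assert (HC : 0 <= e * (INR n * P)) by (apply Rmult_le_pos; [lra | apply Rmult_le_pos; lra]).
  change (f x * Pf <= g x * Pg + e * (INR (S n) * ((M + 1) * P))).
  rewrite S_INR.
  apply Rle_trans with ((g x + e) * (Pg + e * (INR n * P))); [apply Rmult_le_compat; lra |].
  assert (e * Pg <= e * ((M + 1) * P)) by (apply Rmult_le_compat_l; nra).
  assert ((g x + e) * (e * (INR n * P)) <= (M + 1) * (e * (INR n * P))) by (apply Rmult_le_compat_r; lra).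
  nra.
Qed.

End ProdList.

Lemma Rle_of_le_add_mul (a b c : R) :
  0 <= c -> (forall e, 0 < e <= 1 -> a <= b + e * c) -> a <= b.
Proof.
  intros Hc H. apply Rle_plus_epsilon. intros eps Heps.
  set (e := Rmin 1 (eps / (c + 1))).
  assert (He : 0 < e <= 1).
  { split; [apply Rmin_glb_lt; [lra | apply Rdiv_lt_0_compat; lra] | apply Rmin_l]. }
  assert (Hec : e * (c + 1) <= eps).
  { apply Rle_trans with (eps / (c + 1) * (c + 1)); [apply Rmult_le_compat_r; [lra | apply Rmin_r] |].
    right; field; lra. }
  specialize (H e He). nra.
Qed.

Lemma list_upper_bound (l : list R) : exists M, 0 <= M /\ forall x, In x l -> x <= M.
Proof.
  induction l as [|y l [M [HM H]]]; [exists 0; split; [lra | intros x []] |].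
  exists (Rmax y M). split; [apply Rle_trans with M; [exact HM | apply Rmax_r] |].
  intros x [<- | Hx]; [apply Rmax_l | apply Rle_trans with M; [apply H; exact Hx | apply Rmax_r]].
Qed.

Lemma prod_list_map_mul_exp_m1 (l : list R) :
  prod_list (map (fun x => x * exp (-1)) l) * exp (INR (length l)) = prod_list l.
Proof.
  induction l as [|x l IH]; [simpl; rewrite exp_0; ring |].
  unfold prod_list in *. cbn [map fold_right length].
  rewrite <- IH, S_INR, exp_plus.
  replace (exp 1) with (/ exp (-1)) by (rewrite <- exp_Ropp; f_equal; ring).
  field. apply Rgt_not_eq, exp_pos.
Qed.

(* For [s = |z|^2], this is the larger of the squared moduli of the two
   coefficients of [sqrt t x - sqrt (1 - t) z]. *)
Definition landau_factor (s t : R) : R := Rmax t (s * (1 - t)).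

Lemma landau_factor_bounds s t : 0 <= s -> 0 <= t <= 1 ->
  t <= landau_factor s t <= 1 + s.
Proof. intros Hs Ht. split; [apply Rmax_l | apply Rmax_lub; nra]. Qed.

(* The two branches of the maximum meet at [t = s / (1 + s)]. *)
Lemma is_RInt_ln_landau_factor (s : R) : 0 < s ->
  is_RInt (fun t => ln (landau_factor s t)) 0 1 (ln (1 + s) - 1).
Proof.
  intros Hs. set (t0 := s / (1 + s)).
  assert (Ht0 : t0 * (1 + s) = s) by (unfold t0; field; lra).
  assert (Ht0' : 0 < t0 < 1).
  { split; [apply Rdiv_lt_0_compat; lra | nra]. }
  assert (Hleft : is_RInt (fun t => ln (landau_factor s t)) 0 t0
                    ((t0 - 0) * ln s + (- (1 - t0) * ln (1 - t0) - t0))).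
  { eapply is_RInt_ext; [| apply is_RInt_plus_R; [apply is_RInt_const_R | apply is_RInt_ln_1_minus; lra]].
    intros x Hx. rewrite Rmin_left, Rmax_right in Hx by lra.
    unfold landau_factor. rewrite Rmax_right by nra. symmetry; apply ln_mult; lra. }
  assert (Hright : is_RInt (fun t => ln (landau_factor s t)) t0 1 (- 1 - (t0 * ln t0 - t0))).
  { eapply is_RInt_ext; [| apply is_RInt_ln; lra].
    intros x Hx. rewrite Rmin_left, Rmax_right in Hx by lra.
    unfold landau_factor. rewrite Rmax_left by nra. reflexivity. }
  eapply is_RInt_value; [apply (is_RInt_Chasles _ _ _ _ _ _ Hleft Hright) |].
  assert (Hln0 : ln t0 = ln s - ln (1 + s)).
  { unfold t0, Rdiv. rewrite ln_mult, ln_Rinv by (try apply Rinv_0_lt_compat; lra). ring. }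
  assert (Hln1 : ln (1 - t0) = - ln (1 + s)).
  { replace (1 - t0) with (/ (1 + s)) by (unfold t0; field; lra). apply ln_Rinv. lra. }
  unfold plus; simpl. rewrite Hln0, Hln1. unfold t0. field. lra.
Qed.

Definition landau_prod (ss : list R) (t : R) : R :=
  prod_list (map (fun s => landau_factor s t) ss).

(* Jensen's inequality for [exp] applied to [ln (landau_prod ss)]. *)
Lemma landau_prod_RInt_ge_pos (ss : list R) (W : R -> R) (I : R) :
  (forall s, In s ss -> 0 < s) -> is_RInt W 0 1 I ->
  (forall t, 0 < t < 1 -> landau_prod ss t <= W t) ->
  prod_list (map (fun s => (1 + s) * exp (-1)) ss) <= I.
Proof.
  intros Hss HW Hle.
  assert (Hexp : forall (f g : R -> R), (forall s, In s ss -> exp (f s) = g s) ->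
            exp (sum_list (map f ss)) = prod_list (map g ss)).
  { intros f g Hfg. rewrite exp_sum_list, map_map. f_equal. apply map_ext_in. exact Hfg. }
  rewrite <- (Hexp (fun s => ln (1 + s) - 1)).
  2: { intros s Hs. unfold Rminus. rewrite exp_plus, exp_ln by (specialize (Hss s Hs); lra). reflexivity. }
  apply (jensen_exp (fun t => sum_list (map (fun s => ln (landau_factor s t)) ss)) W); [| exact HW |].
  - apply is_RInt_sum_list. intros s Hs. apply is_RInt_ln_landau_factor; auto.
  - intros t Ht. rewrite (Hexp _ (fun s => landau_factor s t)); [apply Hle; exact Ht |].
    intros s Hs. apply exp_ln.
    apply Rlt_le_trans with t; [lra | apply landau_factor_bounds; [apply Rlt_le |]; auto; lra].
Qed.

Lemma landau_factor_le_add s t e : 0 <= e -> 0 <= t <= 1 ->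
  landau_factor (s + e) t <= landau_factor s t + e.
Proof.
  intros He Ht. unfold landau_factor.
  assert (Hl := Rmax_l t (s * (1 - t))). assert (Hr := Rmax_r t (s * (1 - t))).
  apply Rmax_lub; nra.
Qed.

(* Zero entries are handled by raising every [s] by [e] and letting [e -> 0]. *)
Lemma landau_prod_RInt_ge (ss : list R) (W : R -> R) (I : R) :
  (forall s, In s ss -> 0 <= s) -> is_RInt W 0 1 I ->
  (forall t, 0 <= t <= 1 -> landau_prod ss t <= W t) ->
  prod_list (map (fun s => 1 + s) ss) <= exp (INR (length ss)) * I.
Proof.
  intros Hss HW Hle.
  rewrite <- prod_list_map_mul_exp_m1, map_map, length_map, Rmult_comm.
  apply Rmult_le_compat_l; [apply Rlt_le, exp_pos |].
  destruct (list_upper_bound ss) as [M [HM0 HM]].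
  set (C := INR (length ss) * (1 + M + 1) ^ length ss).
  assert (HC : 0 <= C) by (apply Rmult_le_pos; [apply pos_INR | apply pow_le; lra]).
  apply (Rle_of_le_add_mul _ _ C HC). intros e He.
  apply Rle_trans with (prod_list (map (fun s => (1 + (s + e)) * exp (-1)) ss)).
  { apply prod_list_map_le. intros s Hs. assert (Hs0 := Hss s Hs).
    assert (0 < exp (-1)) by apply exp_pos. split; [| apply Rmult_le_compat_r]; nra. }
  rewrite <- (map_map (fun s => s + e) (fun s => (1 + s) * exp (-1))).
  apply (landau_prod_RInt_ge_pos _ (fun t => W t + e * C)).
  - intros s' Hs'. apply in_map_iff in Hs'. destruct Hs' as [s [<- Hs]]. specialize (Hss s Hs). lra.
  - eapply is_RInt_value; [apply is_RInt_plus_R; [exact HW | apply is_RInt_const_R] | ring].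
  - intros t Ht. unfold landau_prod. rewrite map_map.
    apply Rle_trans with (landau_prod ss t + e * C); [| apply Rplus_le_compat_r, Hle; lra].
    unfold landau_prod, C. apply prod_list_map_le_add; [lra | lra |].
    intros s Hs. specialize (Hss s Hs). specialize (HM s Hs).
    assert (Hg := landau_factor_bounds s t Hss ltac:(lra)).
    assert (Hf := landau_factor_bounds (s + e) t ltac:(lra) ltac:(lra)).
    assert (Hfg := landau_factor_le_add s t e ltac:(lra) ltac:(lra)).
    lra.
Qed.

Definition Cxconj (a : Cx) : Cx := (fst a, - snd a).
Definition Cxscale (c : R) (a : Cx) : Cx := (c * fst a, c * snd a).

Ltac cx_ring :=
  repeat match goal with
  | x : Cx |- _ => let x1 := fresh x in let x2 := fresh x in destruct x as [x1 x2]
  end;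
  unfold Cxsub, Cxmul, Cxnorm2, Cx0, Cx1, Cxconj, Cxscale; simpl;
  first [f_equal; ring | ring].

Lemma Cxnorm2_ge0 (a : Cx) : 0 <= Cxnorm2 a.
Proof. unfold Cxnorm2. nra. Qed.

(* Coefficient list of [(a x - b) p]; [prev] is the coefficient of [p]
   preceding the current one. *)
Fixpoint mul_linear_aux (a b prev : Cx) (p : list Cx) : list Cx :=
  match p with
  | nil => [Cxmul a prev]
  | c :: p' => Cxsub (Cxmul a prev) (Cxmul b c) :: mul_linear_aux a b c p'
  end.
Definition mul_linear (a b : Cx) (p : list Cx) : list Cx := mul_linear_aux a b Cx0 p.

Definition coef_norm2 (p : list Cx) : R := sum_list (map Cxnorm2 p).

Lemma coef_norm2_ge0 (p : list Cx) : 0 <= coef_norm2 p.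
Proof.
  unfold coef_norm2. induction p as [|c p IH]; simpl; [lra |].
  assert (H := Cxnorm2_ge0 c). lra.
Qed.

Lemma length_mul_linear_aux a b prev p : length (mul_linear_aux a b prev p) = S (length p).
Proof. revert prev; induction p; intros; simpl; auto. Qed.

Lemma nth_mul_linear_aux a b prev p k :
  nth k (mul_linear_aux a b prev p) Cx0 =
  Cxsub (Cxmul a (nth k (prev :: p) Cx0)) (Cxmul b (nth k p Cx0)).
Proof.
  revert prev k; induction p as [|c p IH]; intros prev k.
  - destruct k as [|[|k]]; simpl; cx_ring.
  - destruct k as [|k]; simpl; [reflexivity | apply IH].
Qed.

Lemma nth_mul_linear a b p k :
  nth k (mul_linear a b p) Cx0 =
  Cxsub (Cxmul a (nth k (Cx0 :: p) Cx0)) (Cxmul b (nth k p Cx0)).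
Proof. apply nth_mul_linear_aux. Qed.

Lemma mul_linear_comm a b c d p :
  mul_linear a b (mul_linear c d p) = mul_linear c d (mul_linear a b p).
Proof.
  apply nth_ext with Cx0 Cx0.
  - unfold mul_linear. rewrite !length_mul_linear_aux. reflexivity.
  - intros k _. rewrite !nth_mul_linear.
    destruct k as [|k]; simpl nth; rewrite ?nth_mul_linear; cx_ring.
Qed.

(* On the unit circle [|a x - b| = |conj b x - conj a|]; on coefficient lists
   this is the isometry below, proved by telescoping in [prev]. *)
Lemma coef_norm2_mul_linear_aux_conj a b prev p :
  coef_norm2 (mul_linear_aux a b prev p) =
  coef_norm2 (mul_linear_aux (Cxconj b) (Cxconj a) prev p)
    + (Cxnorm2 a - Cxnorm2 b) * Cxnorm2 prev.
Proof.
  unfold coef_norm2. revert prev; induction p as [|c p IH]; intros prev; simpl.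
  - cx_ring.
  - rewrite IH. cx_ring.
Qed.

Lemma coef_norm2_mul_linear_conj a b p :
  coef_norm2 (mul_linear a b p) = coef_norm2 (mul_linear (Cxconj b) (Cxconj a) p).
Proof. unfold mul_linear. rewrite coef_norm2_mul_linear_aux_conj. cx_ring. Qed.

Definition mul_linears (fs : list (Cx * Cx)) (q : list Cx) : list Cx :=
  fold_right (fun f acc => mul_linear (fst f) (snd f) acc) q fs.

Lemma mul_linears_mul_linear fs a b q :
  mul_linears fs (mul_linear a b q) = mul_linear a b (mul_linears fs q).
Proof.
  induction fs as [|f fs IH]; simpl; [reflexivity |].
  rewrite IH. apply mul_linear_comm.
Qed.

Lemma length_mul_linears fs q : length (mul_linears fs q) = (length fs + length q)%nat.
Proof.
  induction fs as [|f fs IH]; simpl; [reflexivity |].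
  unfold mul_linear. rewrite length_mul_linear_aux, IH. reflexivity.
Qed.

(* Landau's inequality, by induction on the factors: move the outermost factor
   next to [q], after swapping it with its conjugate reciprocal if needed, so
   that it multiplies the constant coefficient of [q] by its larger coefficient. *)
Lemma landau_ineq (fs : list (Cx * Cx)) (q : list Cx) :
  prod_list (map (fun f => Rmax (Cxnorm2 (fst f)) (Cxnorm2 (snd f))) fs)
    * Cxnorm2 (nth 0 q Cx0) <= coef_norm2 (mul_linears fs q).
Proof.
  revert q; induction fs as [|[a b] fs IH]; intros q; simpl.
  - assert (H := coef_norm2_ge0 (tl q)).
    destruct q as [|c q]; unfold coef_norm2 in *; simpl in *;
      [unfold Cxnorm2, Cx0; simpl; lra | lra].
  - assert (Hp := prod_list_map_ge0 (fun f => Rmax (Cxnorm2 (fst f)) (Cxnorm2 (snd f))) fs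
              (fun f _ => Rle_trans _ _ _ (Cxnorm2_ge0 (fst f)) (Rmax_l _ _))).
    destruct (Rle_dec (Cxnorm2 a) (Cxnorm2 b)) as [Hab | Hab].
    + rewrite Rmax_right by exact Hab. rewrite <- mul_linears_mul_linear.
      eapply Rle_trans; [| apply IH]. rewrite nth_mul_linear. simpl nth.
      replace (Cxnorm2 (Cxsub (Cxmul a Cx0) (Cxmul b (nth 0 q Cx0))))
        with (Cxnorm2 b * Cxnorm2 (nth 0 q Cx0)) by cx_ring. lra.
    + rewrite Rmax_left by lra.
      rewrite coef_norm2_mul_linear_conj, <- mul_linears_mul_linear.
      eapply Rle_trans; [| apply IH]. rewrite nth_mul_linear. simpl nth.
      replace (Cxnorm2 (Cxsub (Cxmul (Cxconj b) Cx0) (Cxmul (Cxconj a) (nth 0 q Cx0))))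
        with (Cxnorm2 a * Cxnorm2 (nth 0 q Cx0)) by cx_ring. lra.
Qed.

Lemma nth_lin_mul_aux z prev p k :
  nth k (lin_mul_aux z prev p) Cx0 = Cxsub (nth k (prev :: p) Cx0) (Cxmul z (nth k p Cx0)).
Proof.
  revert prev k; induction p as [|c p IH]; intros prev k.
  - destruct k as [|[|k]]; simpl; cx_ring.
  - destruct k as [|k]; simpl; [reflexivity | apply IH].
Qed.

Lemma length_lin_mul_aux z prev p : length (lin_mul_aux z prev p) = S (length p).
Proof. revert prev; induction p; intros; simpl; auto. Qed.

Lemma length_prod_lin zs : length (prod_lin zs) = S (length zs).
Proof.
  induction zs as [|z zs IH]; simpl; [reflexivity |].
  unfold lin_mul. rewrite length_lin_mul_aux, IH. reflexivity.
Qed.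

Definition homog_factors (u v : R) (zs : list Cx) : list (Cx * Cx) :=
  map (fun z => ((u, 0), Cxscale v z)) zs.

Lemma nth_mul_linears_homog u v zs k :
  nth k (mul_linears (homog_factors u v zs) [Cx1]) Cx0 =
  Cxscale (u ^ k * v ^ (length zs - k)) (nth k (prod_lin zs) Cx0).
Proof.
  revert k; induction zs as [|z zs IH]; intros k.
  - destruct k as [|[|k]]; simpl; cx_ring.
  - change (mul_linears (homog_factors u v (z :: zs)) [Cx1])
      with (mul_linear (u, 0) (Cxscale v z) (mul_linears (homog_factors u v zs) [Cx1])).
    change (prod_lin (z :: zs)) with (lin_mul z (prod_lin zs)).
    unfold lin_mul. rewrite nth_mul_linear, nth_lin_mul_aux.
    assert (HL := length_prod_lin zs).
    simpl length. destruct k as [|k]; simpl nth; rewrite ?IH.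
    + rewrite Nat.sub_0_r. simpl. cx_ring.
    + destruct (Compare_dec.le_lt_dec (S k) (length zs)) as [Hk | Hk].
      * simpl. replace (length zs - k)%nat with (S (length zs - S k)) by lia. simpl. cx_ring.
      * rewrite (nth_overflow (prod_lin zs) (n := S k)) by lia. simpl. cx_ring.
Qed.

Lemma coef_norm2_sum_f_R0 (p : list Cx) (n : nat) : (length p <= S n)%nat ->
  coef_norm2 p = sum_f_R0 (fun k => Cxnorm2 (nth k p Cx0)) n.
Proof.
  unfold coef_norm2. revert n; induction p as [|c p IH]; intros n Hn.
  - simpl. induction n as [|n IHn]; simpl; [unfold Cxnorm2, Cx0; simpl; ring |].
    rewrite <- IHn by (simpl; lia). unfold Cxnorm2, Cx0; simpl; ring.
  - destruct n as [|n].
    + destruct p; simpl in *; [ring | lia].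
    + rewrite decomp_sum by lia. simpl. rewrite (IH n) by (simpl in Hn; lia). reflexivity.
Qed.

(* [t^k (1-t)^(N-k)] integrates to [1 / ((N+1) C(N,k))]. *)
Definition bw_integrand (p : list Cx) (N : nat) (t : R) : R :=
  sum_f_R0 (fun k => Cxnorm2 (nth k p Cx0) * (t ^ k * (1 - t) ^ (N - k))) N.

Lemma is_RInt_bw_integrand (p : list Cx) (N : nat) :
  is_RInt (bw_integrand p N) 0 1
    (sum_f_R0 (fun k => Cxnorm2 (nth k p Cx0) / Binomial.C N k) N / INR (S N)).
Proof.
  eapply is_RInt_value.
  - apply (is_RInt_sum_f_R0 _ _ (fun k t => Cxnorm2 (nth k p Cx0) * (t ^ k * (1 - t) ^ (N - k)))).
    intros k _. apply is_RInt_scal_R, is_RInt_beta.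
  - unfold Rdiv at 2. rewrite Rmult_comm, scal_sum. apply sum_eq. intros k Hk.
    replace (k + (N - k) + 1)%nat with (S N) by lia.
    rewrite fact_simpl, mult_INR. unfold Binomial.C.
    assert (INR (Factorial.fact k) <> 0) by apply INR_fact_neq_0.
    assert (INR (Factorial.fact (N - k)) <> 0) by apply INR_fact_neq_0.
    assert (INR (Factorial.fact N) <> 0) by apply INR_fact_neq_0.
    assert (INR (S N) <> 0) by (apply not_0_INR; lia).
    field. auto.
Qed.

(* Landau's inequality for the homogenised product
   [prod_i (sqrt t x - sqrt (1 - t) z_i)]. *)
Lemma landau_prod_le_bw_integrand (zs : list Cx) (t : R) : 0 <= t <= 1 ->
  landau_prod (map Cxnorm2 zs) t <= bw_integrand (prod_lin zs) (length zs) t.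
Proof.
  intros Ht.
  assert (L := landau_ineq (homog_factors (sqrt t) (sqrt (1 - t)) zs) [Cx1]).
  replace (Cxnorm2 (nth 0 [Cx1] Cx0)) with 1 in L by (unfold Cxnorm2; simpl; ring).
  rewrite Rmult_1_r in L.
  replace (landau_prod (map Cxnorm2 zs) t) with
    (prod_list (map (fun f => Rmax (Cxnorm2 (fst f)) (Cxnorm2 (snd f)))
       (homog_factors (sqrt t) (sqrt (1 - t)) zs))).
  2: { unfold landau_prod, homog_factors. rewrite !map_map. f_equal. apply map_ext. intros z.
       unfold landau_factor, Cxnorm2, Cxscale. simpl. f_equal.
       - rewrite Rmult_0_l, Rplus_0_r. apply sqrt_sqrt. lra.
       - transitivity ((sqrt (1 - t) * sqrt (1 - t)) * (fst z * fst z + snd z * snd z)); [ring |].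
         rewrite sqrt_sqrt by lra. ring. }
  eapply Rle_trans; [exact L |].
  rewrite (coef_norm2_sum_f_R0 _ (length zs)).
  2: { rewrite length_mul_linears. unfold homog_factors. rewrite length_map. simpl. lia. }
  unfold bw_integrand. right. apply sum_eq. intros k Hk.
  assert (Hsq : forall x n, 0 <= x -> sqrt x ^ n * sqrt x ^ n = x ^ n).
  { intros x n Hx. rewrite <- Rpow_mult_distr, sqrt_sqrt by exact Hx. reflexivity. }
  rewrite nth_mul_linears_homog. unfold Cxnorm2, Cxscale. simpl fst; simpl snd.
  set (c := nth k (prod_lin zs) Cx0). set (m := (length zs - k)%nat).
  transitivity ((sqrt t ^ k * sqrt t ^ k) * (sqrt (1 - t) ^ m * sqrt (1 - t) ^ m)
                  * (fst c * fst c + snd c * snd c)); [ring |].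
  rewrite !Hsq by lra. ring.
Qed.

Lemma bw_norm_lin_factor (z : Cx) : bw_norm (lin_factor z) = sqrt (1 + Cxnorm2 z).
Proof.
  unfold bw_norm, lin_factor, Binomial.C. simpl. f_equal.
  unfold Cxnorm2, Cxopp, Cx1; simpl. field.
Qed.

Lemma prod_bw_factors_sqrt (zs : list Cx) :
  prod_bw_factors zs = sqrt (prod_list (map (fun s => 1 + s) (map Cxnorm2 zs))).
Proof.
  unfold prod_bw_factors. induction zs as [|z zs IH]; simpl; [symmetry; apply sqrt_1 |].
  rewrite IH, bw_norm_lin_factor, sqrt_mult_alt; [reflexivity |].
  assert (H := Cxnorm2_ge0 z). lra.
Qed.

Lemma bw_norm_prod_lin (zs : list Cx) :
  bw_norm (prod_lin zs) =
  sqrt (sum_f_R0 (fun k => Cxnorm2 (nth k (prod_lin zs) Cx0) / Binomial.C (length zs) k) (length zs)).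
Proof. unfold bw_norm. rewrite length_prod_lin, Nat.sub_1_r. reflexivity. Qed.

Theorem theorem1p2 (N : nat) (zs : list Cx) :
  (1 <= N)%nat -> length zs = N ->
  prod_bw_factors zs <=
    sqrt (exp (INR N) / (INR N + 1)) * bw_norm (prod_lin zs).
Proof.
  intros _ <-.
  set (B := sum_f_R0 (fun k => Cxnorm2 (nth k (prod_lin zs) Cx0) / Binomial.C (length zs) k) (length zs)).
  assert (Hkey : prod_list (map (fun s => 1 + s) (map Cxnorm2 zs))
                  <= exp (INR (length (map Cxnorm2 zs))) * (B / INR (S (length zs)))).
  { apply (landau_prod_RInt_ge _ (bw_integrand (prod_lin zs) (length zs))).
    - intros s Hs. apply in_map_iff in Hs. destruct Hs as [z [<- _]]. apply Cxnorm2_ge0.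
    - apply is_RInt_bw_integrand.
    - intros t Ht. apply landau_prod_le_bw_integrand. exact Ht. }
  rewrite length_map, S_INR in Hkey.
  rewrite prod_bw_factors_sqrt, bw_norm_prod_lin, <- sqrt_mult_alt.
  - apply sqrt_le_1_alt. fold B. eapply Rle_trans; [exact Hkey | right; field].
    assert (H := pos_INR (length zs)). lra.
  - apply Rlt_le, Rdiv_lt_0_compat; [apply exp_pos | assert (H := pos_INR (length zs)); lra].
Qed.
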